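(* Let $s=6r+i$ with $r\ge1$ and $i\in\{0,\dots,5\}$. Among all polyiamonds with site-perimeter $s$, the maximal area is attained by the quasi-regular hexagon $E_{B_i}(r)$ (with $E_{B_0}(r)=E(r)$), and every polyiamond with site-perimeter $s$ attaining this maximal area is a quasi-regular hexagon (an image of $E_{B_i}(r)$ under a symmetry of $\mathbb T^2$).
   Context: Faces are the closed triangular faces of the triangular lattice $\mathbb T^2$ in $\mathbb R^2$. A polyiamond $P$ is a finite nonempty union of faces that is connected through shared edges (two faces sharing only a vertex are not adjacent); faces not in $P$ are empty faces. Its area $\|P\|$ is the number of its faces; its edge-perimeter $p(P)$ is the number of edges of $\mathbb T^2$ separating a face of $P$ from an empty face; its site-perimeter $s(P)$ is the number of empty faces sharing at least one edge with a face of $P$. For integers $d\ge1$, $a,b,c\ge0$ with $a+b,b+c,c+a\le d$, $T^d_{a,b,c}$ is the polyiamond obtained from an equilateral triangle of side length $d$ with sides on lattice lines (the union of its $d^2$ faces) by removing the equilateral sub-triangles of side lengths $a,b,c$ at its three corners; its boundary is a (possibly degenerate) hexagon with side lengths, in cyclic order, $a,\ d-a-b,\ b,\ d-b-c,\ c,\ d-c-a$, its area is $d^2-a^2-b^2-c^2$ and its edge- and site-perimeter equal $3d-a-b-c$. Quasi-regular hexagons: for $r\ge1$ let $E(r)=T^{3r}_{r,r,r}$ (regular hexagon of side $r$), $E_{B_1}(r)=T^{3r}_{r-1,r,r}$, $E_{B_2}(r)=T^{3r+1}_{r,r,r+1}$, $E_{B_3}(r)=T^{3r+1}_{r,r,r}$,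 $E_{B_4}(r)=T^{3r+2}_{r,r+1,r+1}$, $E_{B_5}(r)=T^{3r+2}_{r,r,r+1}$. Their areas are $6r^2,\ 6r^2+2r-1,\ 6r^2+4r,\ 6r^2+6r+1,\ 6r^2+8r+2,\ 6r^2+10r+3$, and their edge-perimeters (equal to their site-perimeters) are $6r,6r+1,\dots,6r+5$. A quasi-regular hexagon is any image of one of these under a symmetry (translation, rotation, reflection) of $\mathbb T^2$; $\mathcal Q$ denotes the set of all quasi-regular hexagons. *)

From HB Require Import structures.
From mathcomp Require Import all_boot all_order all_algebra.
From mathcomp Require Import finmap.
Set Implicit Arguments. Unset Strict Implicit. Unset Printing Implicit Defensive.
Import Order.TTheory GRing.Theory Num.Theory.
Local Open Scope fset_scope.
Local Open Scope ring_scope.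

(* Lattice vertices are u*e1 + v*e2 with e1 = (1,0), e2 = (1/2, sqrt 3/2),
   (u, v) in Z^2.  Faces:
     (x, y, true)  = up face   with vertices (x,y), (x+1,y), (x,y+1);
     (x, y, false) = down face with vertices (x+1,y), (x,y+1), (x+1,y+1). *)
Definition face := (int * int * bool)%type.
Definition Up (x y : int) : face := (x, y, true).
Definition Down (x y : int) : face := (x, y, false).

Definition nbrs (f : face) : seq face :=
  let: (x, y, b) := f in
  if b then [:: Down x y; Down (x - 1) y; Down x (y - 1)]
  else [:: Up x y; Up (x + 1) y; Up x (y + 1)].

Definition adj (f g : face) : bool := g \in nbrs f.

Definition edge_connected (P : {fset face}) : Prop :=
  forall f g, f \in P -> g \in P ->
    exists p : seq face, [/\ path adj f p, last f p = g & all (fun h => h \in P) p].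

Definition polyiamond (P : {fset face}) : Prop := P != fset0 /\ edge_connected P.

Definition area (P : {fset face}) : nat := #|` P|.

Definition site_boundary (P : {fset face}) : {fset face} :=
  [fset g | g in flatten [seq nbrs f | f <- enum_fset P] & g \notin P].

Definition site_perimeter (P : {fset face}) : nat := #|` site_boundary P|.

Definition transl (a b : int) (f : face) : face :=
  let: (x, y, o) := f in (x + a, y + b, o).
(* rotation by 60 degrees about the origin: (u,v) |-> (-v, u+v) *)
Definition rot60 (f : face) : face :=
  let: (x, y, o) := f in
  if o then Down (- y - 1) (x + y) else Up (- y - 1) (x + y + 1).
Definition refl (f : face) : face :=
  let: (x, y, o) := f in (y, x, o).

(* Every symmetry of the triangular lattice is of this form
   (translation o rotation^k o reflection^e). *)
Definition lattice_sym (g : face -> face) : Prop :=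
  exists (a b : int) (k : nat) (e : bool),
    g =1 (fun f => transl a b (iter k rot60 (if e then refl f else f))).

(* T^d_{a,b,c}: triangle {u >= 0, v >= 0, u + v <= d} minus the corner
   triangles of side a at (0,0), b at (d,0), c at (0,d). *)
Definition in_T (d a b c : nat) (f : face) : bool :=
  let: (x, y, o) := f in
  [&& 0 <= x, 0 <= y, x < (d - b)%:Z, y < (d - c)%:Z &
   if o then (a%:Z <= x + y) && (x + y <= d%:Z - 1)
   else (a%:Z <= x + y + 1) && (x + y <= d%:Z - 2)].

Definition T_cand (d : nat) : seq face :=
  flatten (flatten [seq [seq [:: Up x%:Z y%:Z; Down x%:Z y%:Z] | y <- iota 0 d] | x <- iota 0 d]).

Definition Tpoly (d a b c : nat) : {fset face} :=
  [fset f | f in T_cand d & in_T d a b c f].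

Definition EB (i r : nat) : {fset face} :=
  match i with
  | 0 => Tpoly (3 * r) r r r
  | 1 => Tpoly (3 * r) r.-1 r r
  | 2 => Tpoly (3 * r).+1 r r r.+1
  | 3 => Tpoly (3 * r).+1 r r r
  | 4 => Tpoly (3 * r).+2 r r.+1 r.+1
  | _ => Tpoly (3 * r).+2 r r r.+1
  end.

From mathcomp Require Import all_boot all_order all_algebra.
From mathcomp Require Import finmap zify.

(* Every face f = (x, y, o) lies in three strips, one per edge direction of
   T^2: the x-strip fx f = x, the y-strip fy f = y and the w-strip
   fw f = x + y + [o is a down face].  Edge-adjacent faces differ by at most
   one in each strip index, so the strips met by a polyiamond P form three
   integer intervals, of lengths nx, ny, nw.
   1. In every strip met by P, the face just before the first face of P is an
      empty neighbour of P; these faces are pairwise distinct, so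
      s(P) >= nx + ny + nw (lemma [strip_site_perimeter_bound]).
   2. The three intervals cut out a translate of a truncated triangle
      T^D_{A,B,C} containing P with p := 3D - A - B - C = nx + ny + nw <= s(P)
      (lemma [bounding_hexagon]).
   3. |T^D_{A,B,C}| = D^2 - A^2 - B^2 - C^2 and
      6 (D^2 - A^2 - B^2 - C^2) = p^2 - Q(D,A,B,C) for a quadratic form
      Q >= 0 whose minimum m_i over p = 6r + i is attained exactly by the
      quasi-regular hexagons; this bounds the area (lemma [area_bound]).
   4. Conversely E_{B_i}(r) is a polyiamond of site-perimeter at most
      3D - A - B - C = 6r + i and of area ((6r + i)^2 - m_i) / 6; an optimal P
      equals its bounding hexagon, which has the same side lengths as
      E_{B_i}(r) up to a symmetry of T^2 (lemma [optimal_hexagon_congruent]). *)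

Set Implicit Arguments. Unset Strict Implicit. Unset Printing Implicit Defensive.
Import Order.TTheory GRing.Theory Num.Theory.
Local Open Scope fset_scope.
Local Open Scope ring_scope.

(* Strip indices of a face, and its positions inside its x-strip (keyY) and
   inside its y- and w-strips (keyX). *)
Definition fx (f : face) : int := f.1.1.
Definition fy (f : face) : int := f.1.2.
Definition is_down (f : face) : int := if f.2 then 0 else 1.
Definition fw (f : face) : int := fx f + fy f + is_down f.
Definition keyX (f : face) : int := 2 * fx f + is_down f.
Definition keyY (f : face) : int := 2 * fy f + is_down f.

Ltac face_cases f := let x := fresh "x" in let y := fresh "y" in case: f => [[x y] []].
Ltac unfold_coords := unfold fw, keyX, keyY, fx, fy, is_down, Up, Down in *; simpl in *.

Lemma face_eq (x y x' y' : int) (o o' : bool) :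
  ((x, y, o) == (x', y', o') :> face) = [&& x == x', y == y' & o == o'].
Proof. by rewrite !xpair_eqE andbA. Qed.

Lemma fw_bounds f : fx f + fy f <= fw f <= fx f + fy f + 1.
Proof. face_cases f; unfold_coords; lia. Qed.

Lemma adj_sym f g : adj f g = adj g f.
Proof. rewrite /adj; face_cases f; face_cases g; rewrite /= !inE /Up /Down !face_eq /=; lia. Qed.

Lemma adj_strips f g : adj f g ->
  [/\ -1 <= fx f - fx g <= 1, -1 <= fy f - fy g <= 1 & -1 <= fw f - fw g <= 1].
Proof.
rewrite /adj; face_cases f; face_cases g; rewrite /= !inE /Up /Down !face_eq.
all: unfold_coords => H; split; lia.
Qed.

Lemma adj_fx f g : adj f g -> -1 <= fx f - fx g <= 1. Proof. by case/adj_strips. Qed.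
Lemma adj_fy f g : adj f g -> -1 <= fy f - fy g <= 1. Proof. by case/adj_strips. Qed.
Lemma adj_fw f g : adj f g -> -1 <= fw f - fw g <= 1. Proof. by case/adj_strips. Qed.

Lemma mem_site_boundary (P : {fset face}) g :
  (g \in site_boundary P) = (g \notin P) && has (fun f => g \in nbrs f) P.
Proof.
apply/imfsetP/andP => [[h]|[gNP /hasP[f fP gf]]].
  rewrite inE /= => /andP[/flatten_mapP[f fP gf] hNP] ->.
  by split=> //; apply/hasP; exists f.
by exists g => //; rewrite inE /= gNP andbT; apply/flatten_mapP; exists f.
Qed.

Lemma mem_Tpoly d a b c f : (f \in Tpoly d a b c) =
  [&& 0 <= fx f, 0 <= fy f, fx f < (d - b)%N%:Z, fy f < (d - c)%N%:Z,
      a%:Z <= fw f & fw f <= d%:Z - 1].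
Proof.
have in_TE : in_T d a b c f = [&& 0 <= fx f, 0 <= fy f, fx f < (d - b)%N%:Z,
    fy f < (d - c)%N%:Z, a%:Z <= fw f & fw f <= d%:Z - 1].
  by face_cases f; unfold_coords; lia.
rewrite -in_TE; apply/imfsetP/idP => [[h]|hf]; first by rewrite inE /= => /andP[_ ?] ->.
exists f => //; rewrite inE /= hf andbT; move: hf; rewrite in_TE {in_TE}.
case: f => [[x y] o]; rewrite /fx /fy /= => /and5P[hx hy hxd hyd _].
case: x hx hxd => // xn _ hxd; case: y hy hyd => // yn _ hyd.
apply/flattenP; exists [:: Up xn yn; Down xn yn]; last by case: o; rewrite !inE eqxx ?orbT.
apply/flatten_mapP; exists xn; first by rewrite mem_iota; lia.
by apply/mapP; exists yn; rewrite // mem_iota; lia.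
Qed.

Definition connected_in (R : {fset face}) (f g : face) : Prop :=
  exists p, [/\ path adj f p, last f p = g & all (fun h => h \in R) p].

Lemma connected_in_refl R f : connected_in R f f.
Proof. by exists [::]. Qed.

Lemma connected_in_trans R f g h :
  connected_in R f g -> connected_in R g h -> connected_in R f h.
Proof.
move=> [p [fp pg pR]] [q [gq qh qR]]; exists (p ++ q).
by rewrite cat_path last_cat pg fp gq qh all_cat pR qR.
Qed.

Lemma connected_in_step R f g : adj f g -> g \in R -> connected_in R f g.
Proof. by move=> fg gR; exists [:: g]; rewrite /= fg gR. Qed.

Lemma connected_in_sym R f g : f \in R -> connected_in R f g -> connected_in R g f.
Proof.
move=> fR [p [fp pg pR]]; exists (rev (belast f p)); split.
- by rewrite -pg rev_path; apply: sub_path fp => x y; rewrite adj_sym.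
- by rewrite -pg; case: p {fp pg pR} => //= z p; rewrite rev_cons last_rcons.
- rewrite all_rev; apply/allP => x /mem_belast; rewrite inE => /orP[/eqP->//|].
  exact: (allP pR).
Qed.

Lemma seq_argmin (T : eqType) (s : seq T) (k : T -> int) : s != [::] ->
  exists2 h, h \in s & forall h', h' \in s -> k h <= k h'.
Proof.
elim: s => // a [|b s] IH _.
  by exists a; rewrite ?inE // => h'; rewrite inE => /eqP ->.
have [h hs hmin] := IH isT.
have [ah|ha] := lerP (k a) (k h).
  exists a; first by rewrite inE eqxx.
  by move=> h'; rewrite inE => /orP[/eqP->//|/hmin]; apply: le_trans.
exists h; first by rewrite inE hs orbT.
by move=> h'; rewrite inE => /orP[/eqP->|/hmin//]; apply: ltW.
Qed.

Lemma path_intermediate (P : {fset face}) (k : face -> int)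
    (k_lip : forall f g, adj f g -> -1 <= k f - k g <= 1) f p :
  path adj f p -> all (fun h => h \in P) p -> f \in P ->
  forall v, k f <= v <= k (last f p) -> exists2 h, h \in P & k h = v.
Proof.
elim: p f => [|g p IH] f /=; first by move=> _ _ fP v fv; exists f => //; lia.
move=> /andP[fg gp] /andP[gP pP] fP v fv.
have [->|vf] := eqVneq v (k f); first by exists f.
by apply: (IH g gp pP gP); have := k_lip _ _ fg; lia.
Qed.

Lemma lipschitz_range (P : {fset face}) (k : face -> int) :
  polyiamond P -> (forall f g, adj f g -> -1 <= k f - k g <= 1) ->
  exists k0 k1, [/\ forall h, h \in P -> k0 <= k h <= k1,
    (exists2 h, h \in P & k h = k0), (exists2 h, h \in P & k h = k1) &
    forall v, k0 <= v <= k1 -> exists2 h, h \in P & k h = v].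
Proof.
move=> [/fset0Pn[f fP] Pconn] k_lip.
have Pne : enum_fset P != [::].
  by apply/eqP => eP; move: fP; rewrite -[f \in P]/(f \in enum_fset P) eP.
have [h0 h0P h0min] := seq_argmin k Pne.
have [h1 h1P h1max] := seq_argmin (fun h => - k h) Pne.
exists (k h0), (k h1); split; [|by exists h0|by exists h1|].
  by move=> h hP; rewrite h0min //=; have := h1max h hP; lia.
move=> v hv; have [p [h0p ph1 pP]] := Pconn h0 h1 h0P h1P.
by apply: (path_intermediate k_lip h0p pP h0P); rewrite ph1.
Qed.

(* In every strip of a family met by P, the face immediately preceding the
   first face of P in that strip is an empty neighbour of P. *)
Section StripGates.
Variables (strip pos : face -> int) (before : face -> face).
Hypothesis before_strip : forall f, strip (before f) = strip f.
Hypothesis before_pos : forall f, pos (before f) < pos f.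
Hypothesis before_nbr : forall f, before f \in nbrs f.

Definition first_in_strip (P : {fset face}) (f : face) : bool :=
  all (fun h => (strip h == strip f) ==> (pos f <= pos h)) P.

Definition strip_gates (P : {fset face}) : {fset face} :=
  [fset before f | f in P & first_in_strip P f].

Lemma strip_gates_sub P : strip_gates P `<=` site_boundary P.
Proof.
apply/fsubsetP => g /imfsetP[f]; rewrite inE /= => /andP[fP fmin] ->.
rewrite mem_site_boundary; apply/andP; split; last by apply/hasP; exists f.
apply/negP => /(allP fmin); rewrite before_strip eqxx /=.
by have := before_pos f; lia.
Qed.

(* Distinct strips have distinct gates, so there are at least as many gates
   as strips met by P. *)
Lemma card_strip_gates P c0 c1 :
  (forall v, c0 <= v <= c1 -> exists2 h, h \in P & strip h = v) ->
  c1 - c0 + 1 <= (#|` strip_gates P|)%:Z.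
Proof.
move=> Pstrips; have [|c01] := ltrP c1 c0; first lia.
pose n := absz (c1 - c0 + 1).
pose I := [fset c0 + k%:Z | k in iota 0 n].
have cardI : #|` I| = n.
  rewrite card_in_imfset /=; first by rewrite undup_id ?iota_uniq // size_iota.
  by move=> k1 k2 _ _ /=; lia.
have I_sub : I `<=` [fset strip g | g in strip_gates P].
  apply/fsubsetP => v /imfsetP[k]; rewrite /= mem_iota add0n => kn ->.
  have [h hP hv] := Pstrips (c0 + k%:Z) ltac:(lia).
  have Sne : [seq h' <- P | strip h' == strip h] != [::].
    by apply/eqP => /(congr1 (fun s => h \in s)); rewrite mem_filter hP eqxx.
  have [m] := seq_argmin pos Sne; rewrite mem_filter => /andP[/eqP mh mP] mmin.
  apply/imfsetP; exists (before m); last by rewrite before_strip mh hv.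
  apply/imfsetP; exists m => //; rewrite inE /= mP /=.
  apply/allP => h' h'P; apply/implyP => /eqP h'm.
  by apply: mmin; rewrite mem_filter h'P h'm mh eqxx.
have nE : n%:Z = c1 - c0 + 1 by rewrite /n; lia.
have : (n <= #|` strip_gates P|)%N.
  by rewrite -cardI; apply: leq_trans (fsubset_leq_card I_sub) (leq_imfset_card _ _ _).
by clearbody n; lia.
Qed.

End StripGates.

(* The gate maps of the three strip families; in y-strips faces are ordered
   by decreasing keyX, so the gate lies after the first face. *)
Definition before_x (f : face) : face :=
  let: (x, y, o) := f in if o then Down x (y - 1) else Up x y.
Definition after_y (f : face) : face :=
  let: (x, y, o) := f in if o then Down x y else Up (x + 1) y.
Definition before_w (f : face) : face :=
  let: (x, y, o) := f in if o then Down (x - 1) y else Up x (y + 1).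

Definition gates_x (P : {fset face}) : {fset face} := strip_gates fx keyY before_x P.
Definition gates_y (P : {fset face}) : {fset face} :=
  strip_gates fy (fun f => - keyX f) after_y P.
Definition gates_w (P : {fset face}) : {fset face} := strip_gates fw keyX before_w P.

Lemma gates_disjoint P :
  [/\ gates_x P `&` gates_y P = fset0, gates_x P `&` gates_w P = fset0
    & gates_y P `&` gates_w P = fset0].
Proof.
split; apply/fsetP => g; rewrite !inE; apply/negP => /andP[].
all: move=> /imfsetP[f1]; rewrite inE /= => /andP[f1P f1min] ->.
all: move=> /imfsetP[f2]; rewrite inE /= => /andP[f2P f2min].
all: move: (allP f1min _ f2P) (allP f2min _ f1P); clear f1P f2P f1min f2min.
all: face_cases f1; face_cases f2; unfold_coords; move=> h1 h2 /eqP; rewrite face_eq /=; lia.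
Qed.

Lemma strip_site_perimeter_bound (P : {fset face}) (x0 x1 y0 y1 w0 w1 : int) :
  (forall v, x0 <= v <= x1 -> exists2 h, h \in P & fx h = v) ->
  (forall v, y0 <= v <= y1 -> exists2 h, h \in P & fy h = v) ->
  (forall v, w0 <= v <= w1 -> exists2 h, h \in P & fw h = v) ->
  (x1 - x0 + 1) + (y1 - y0 + 1) + (w1 - w0 + 1) <= (site_perimeter P)%:Z.
Proof.
move=> Px Py Pw.
have cx : x1 - x0 + 1 <= (#|` gates_x P|)%:Z.
  by apply: card_strip_gates Px => f; face_cases f.
have cy : y1 - y0 + 1 <= (#|` gates_y P|)%:Z.
  by apply: card_strip_gates Py => f; face_cases f.
have cw : w1 - w0 + 1 <= (#|` gates_w P|)%:Z.
  by apply: card_strip_gates Pw => f; face_cases f; unfold_coords; lia.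
have sub : gates_x P `|` gates_y P `|` gates_w P `<=` site_boundary P.
{ rewrite !fsubUset -andbA; apply/and3P; split; apply: strip_gates_sub.
  all: by move=> f; face_cases f; unfold_coords; rewrite ?inE ?eqxx ?orbT //; lia. }
have [dxy dxw dyw] := gates_disjoint P.
have := fsubset_leq_card sub.
have := cardfsUI (gates_x P `|` gates_y P) (gates_w P).
have := cardfsUI (gates_x P) (gates_y P).
rewrite fsetIUl dxy dxw dyw fsetU0 cardfs0 /site_perimeter; lia.
Qed.

Lemma transl_K u v : cancel (transl u v) (transl (- u) (- v)).
Proof. by move=> f; face_cases f; rewrite /= !addrK. Qed.

Lemma transl_K' u v : cancel (transl (- u) (- v)) (transl u v).
Proof. by move=> f; face_cases f; rewrite /= !subrK. Qed.

Lemma mem_transl (S : {fset face}) u v f :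
  (f \in transl u v @` S) = (transl (- u) (- v) f \in S).
Proof.
apply/imfsetP/idP => [[g gS ->]|fS]; first by rewrite transl_K.
by exists (transl (- u) (- v) f); rewrite ?transl_K'.
Qed.

Lemma card_transl (S : {fset face}) u v : #|` transl u v @` S| = #|` S|.
Proof. exact/card_imfset/(can_inj (transl_K u v)). Qed.

Lemma fx_transl u v f : fx (transl u v f) = fx f + u. Proof. by face_cases f. Qed.
Lemma fy_transl u v f : fy (transl u v f) = fy f + v. Proof. by face_cases f. Qed.
Lemma fw_transl u v f : fw (transl u v f) = fw f + u + v.
Proof. face_cases f; unfold_coords; lia. Qed.

Lemma mixed_radix_inj n A B A' B' : (B < n)%N -> (B' < n)%N ->
  (A * n + B = A' * n + B')%N -> A = A' /\ B = B'.
Proof.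
move=> Bn B'n e; have n0 : (0 < n)%N by lia.
have := congr1 (fun k => k %/ n)%N e; rewrite !divnMDl // !divn_small // !addn0 => eA.
by split=> //; move: e; rewrite eA => /addnI.
Qed.

(* The full triangle of side n has n^2 faces: up faces (x, y) and down faces
   (n - 1 - x, n - 1 - y) together encode [0, n^2) in base n. *)
Lemma card_triangle n : #|` Tpoly n 0 0 0| = (n * n)%N.
Proof.
pose code (f : face) : nat := if f.2 then (absz (fx f) * n + absz (fy f))%N
  else ((n.-1 - absz (fx f)) * n + (n.-1 - absz (fy f)))%N.
have /card_in_imfsetP/eqP <- : {in Tpoly n 0 0 0 &, injective code}.
{ move=> f g; rewrite !mem_Tpoly /code; face_cases f; face_cases g; unfold_coords.
  all: move=> hf hg e; have [] := mixed_radix_inj _ _ e; try lia.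
  all: by move=> e1 e2; apply/eqP; rewrite face_eq /=; lia. }
have -> : [fset code f | f in Tpoly n 0 0 0] = [fset k | k in iota 0 (n * n)].
  apply/fsetP => k; apply/imfsetP/imfsetP => /= [[f]|[k']].
    rewrite mem_Tpoly => hf ->; exists (code f) => //; rewrite mem_iota add0n /code.
    by move: hf; face_cases f; unfold_coords; nia.
  rewrite mem_iota add0n => hk ->; have n0 : (0 < n)%N by nia.
  have k'E := divn_eq k' n; have := ltn_mod k' n; rewrite n0 => mod_n.
  have div_n : (k' %/ n < n)%N by rewrite ltn_divLR.
  have [small|large] := leqP (k' %/ n + k' %% n) n.-1.
    exists (Up (k' %/ n)%:Z (k' %% n)%:Z); last by [].
    by rewrite mem_Tpoly; unfold_coords; lia.
  exists (Down (n.-1 - k' %/ n)%:Z (n.-1 - k' %% n)%:Z).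
    by rewrite mem_Tpoly; unfold_coords; lia.
  by rewrite /code /fx /fy /= !subKn //; lia.
by rewrite card_fseq undup_id ?iota_uniq // size_iota.
Qed.

(* |T^d_{a,b,c}| = d^2 - a^2 - b^2 - c^2: the full triangle is the disjoint
   union of T^d_{a,b,c} and its three corner triangles. *)
Lemma card_Tpoly d a b c : (a + b <= d)%N -> (b + c <= d)%N -> (c + a <= d)%N ->
  (#|` Tpoly d a b c| + a * a + b * b + c * c = d * d)%N.
Proof.
move=> ab bc ca.
set R := Tpoly d a b c; set Ca := Tpoly a 0 0 0.
set Cb := transl (d - b)%N%:Z 0 @` Tpoly b 0 0 0.
set Cc := transl 0 (d - c)%N%:Z @` Tpoly c 0 0 0.
have E : Tpoly d 0 0 0 = R `|` Ca `|` Cb `|` Cc.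
  by apply/fsetP => f; move: (fw_bounds f);
     rewrite !in_fsetU !mem_transl !mem_Tpoly !fx_transl !fy_transl !fw_transl; lia.
have disj S S' : (forall f, f \in S -> f \in S' -> False) -> S `&` S' = fset0.
  by move=> SS'; apply/fsetP => f; rewrite in_fsetI in_fset0; apply/andP => -[/SS'].
have d1 : R `&` Ca = fset0.
  by apply: disj => f; move: (fw_bounds f); rewrite !mem_Tpoly; lia.
have d2 : (R `|` Ca) `&` Cb = fset0.
  by apply: disj => f; move: (fw_bounds f);
     rewrite !in_fsetU !mem_transl !mem_Tpoly !fx_transl !fy_transl !fw_transl; lia.
have d3 : (R `|` Ca `|` Cb) `&` Cc = fset0.
  by apply: disj => f; move: (fw_bounds f);
     rewrite !in_fsetU !mem_transl !mem_Tpoly !fx_transl !fy_transl !fw_transl; lia.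
have := card_triangle d; rewrite E.
have := cardfsUI (R `|` Ca `|` Cb) Cc; have := cardfsUI (R `|` Ca) Cb.
have := cardfsUI R Ca.
by rewrite d1 d2 d3 cardfs0 /Cb /Cc !card_transl /Ca !card_triangle; lia.
Qed.

(* Runs of n consecutive faces of one orientation along a lattice line, in
   the three edge directions; they cover the site boundary of T^d_{a,b,c}. *)
Definition run_y (u v : int) (o : bool) (n : nat) : {fset face} :=
  [fset ((u, v + k%:Z, o) : face) | k in iota 0 n].
Definition run_x (u v : int) (o : bool) (n : nat) : {fset face} :=
  [fset ((u + k%:Z, v, o) : face) | k in iota 0 n].
Definition run_d (u v : int) (o : bool) (n : nat) : {fset face} :=
  [fset ((u + k%:Z, v - k%:Z, o) : face) | k in iota 0 n].

Lemma card_iota_image (F : nat -> face) n : (#|` [fset F k | k in iota 0 n]| <= n)%N.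
Proof.
by apply: leq_trans (leq_imfset_card _ _ _) _; rewrite /= undup_id ?iota_uniq // size_iota.
Qed.

Lemma card_runs u v o n :
  [/\ #|` run_x u v o n| <= n, #|` run_y u v o n| <= n & #|` run_d u v o n| <= n]%N.
Proof. by split; apply: card_iota_image. Qed.

Lemma mem_run_y u v o n g : (g \in run_y u v o n) =
  [&& g.2 == o, fx g == u, v <= fy g & fy g < v + n%:Z].
Proof.
apply/imfsetP/idP => [[k]|]; rewrite /= ?mem_iota; first by move=> kn ->; unfold_coords; lia.
move: g => [[x y] o']; unfold_coords => hg; exists (absz (y - v)); first by rewrite mem_iota; lia.
by apply/eqP; rewrite face_eq; lia.
Qed.

Lemma mem_run_x u v o n g : (g \in run_x u v o n) =
  [&& g.2 == o, fy g == v, u <= fx g & fx g < u + n%:Z].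
Proof.
apply/imfsetP/idP => [[k]|]; rewrite /= ?mem_iota; first by move=> kn ->; unfold_coords; lia.
move: g => [[x y] o']; unfold_coords => hg; exists (absz (x - u)); first by rewrite mem_iota; lia.
by apply/eqP; rewrite face_eq; lia.
Qed.

Lemma mem_run_d u v o n g : (g \in run_d u v o n) =
  [&& g.2 == o, fx g + fy g == u + v, u <= fx g & fx g < u + n%:Z].
Proof.
apply/imfsetP/idP => [[k]|]; rewrite /= ?mem_iota; first by move=> kn ->; unfold_coords; lia.
move: g => [[x y] o']; unfold_coords => hg; exists (absz (x - u)); first by rewrite mem_iota; lia.
by apply/eqP; rewrite face_eq; lia.
Qed.

Lemma site_perimeter_Tpoly d a b c :
  (a + b <= d)%N -> (b + c <= d)%N -> (c + a <= d)%N ->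
  (site_perimeter (Tpoly d a b c) <= 3 * d - a - b - c)%N.
Proof.
move=> ab bc ca.
set F1 := run_y (-1) a%:Z false (d - c - a).
set F2 := run_y (d - b)%N%:Z 0 true b.
set F3 := run_x a%:Z (-1) false (d - b - a).
set F4 := run_x 0 (d - c)%N%:Z true c.
set F5 := run_d 0 (a%:Z - 1) true a.
set F6 := run_d c%:Z (d%:Z - 1 - c%:Z) false (d - b - c).
have cover : site_boundary (Tpoly d a b c) `<=` F1 `|` F2 `|` F3 `|` F4 `|` F5 `|` F6.
  apply/fsubsetP => g; rewrite mem_site_boundary => /andP[gT /hasP[f fT gf]].
  rewrite !in_fsetU !mem_run_y !mem_run_x !mem_run_d; move: gT fT gf; rewrite !mem_Tpoly.
  face_cases f; rewrite /= !inE => gT fT /orP[/eqP e|/orP[/eqP e|/eqP e]];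
    move: gT fT; rewrite e; unfold_coords; lia.
have cardU (S S' : {fset face}) : (#|` S `|` S'| <= #|` S| + #|` S'|)%N.
  by rewrite cardfsU leq_subr.
have := fsubset_leq_card cover.
have := cardU (F1 `|` F2 `|` F3 `|` F4 `|` F5) F6; have := cardU (F1 `|` F2 `|` F3 `|` F4) F5.
have := cardU (F1 `|` F2 `|` F3) F4; have := cardU (F1 `|` F2) F3; have := cardU F1 F2.
have [_ c1 _] := card_runs (-1) a%:Z false (d - c - a).
have [_ c2 _] := card_runs (d - b)%N%:Z 0 true b.
have [c3 _ _] := card_runs a%:Z (-1) false (d - b - a).
have [c4 _ _] := card_runs 0 (d - c)%N%:Z true c.
have [_ _ c5] := card_runs 0 (a%:Z - 1) true a.
have [_ _ c6] := card_runs c%:Z (d%:Z - 1 - c%:Z) false (d - b - c).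
by rewrite -/F1 -/F2 -/F3 -/F4 -/F5 -/F6 in c1 c2 c3 c4 c5 c6; rewrite /site_perimeter; lia.
Qed.

(* When a + c < d and b < d, T^d_{a,b,c} is edge-connected: every face
   reaches the face Up 0 a at its lower-left cut, first by walking down to
   the w-strip a, then along that strip. *)
Section TpolyConnected.
Variables d a b c : nat.
Hypothesis ac_d : (a + c < d)%N.
Hypothesis b_d : (b < d)%N.
Let T := Tpoly d a b c.
Let corner := Up 0 a%:Z.

Lemma corner_in : corner \in T.
Proof. by rewrite /T mem_Tpoly; unfold_coords; lia. Qed.

Lemma adj_cases x y : [/\ adj (Up x y) (Down x y), adj (Up x y) (Down (x - 1) y),
  adj (Up x y) (Down x (y - 1)), adj (Down x y) (Up x y) & adj (Down x y) (Up x (y + 1))].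
Proof. by rewrite /adj /= !inE !eqxx ?orbT. Qed.

Lemma bottom_strip_connected n f : f \in T -> fw f = a%:Z -> (absz (keyX f) <= n)%N ->
  connected_in T f corner.
Proof.
elim: n f => [|n IH] f; face_cases f; rewrite /T mem_Tpoly => fT fw_a key_n;
  move: (fT); unfold_coords => fT'; have [A1 A2 A3 A4 A5] := adj_cases x y.
- have -> : corner = Up x y by apply/eqP; rewrite /corner /Up face_eq; lia.
  exact: connected_in_refl.
- lia.
- have [x0|x0] := eqVneq x 0.
    have -> : corner = Up x y by apply/eqP; rewrite /corner /Up face_eq; lia.
    exact: connected_in_refl.
  have gT : Down (x - 1) y \in T by rewrite /T mem_Tpoly; unfold_coords; lia.
  apply: connected_in_trans (connected_in_step A2 gT) (IH _ gT _ _); unfold_coords; lia.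
- have gT : Up x (y + 1) \in T by rewrite /T mem_Tpoly; unfold_coords; lia.
  apply: connected_in_trans (connected_in_step A5 gT) (IH _ gT _ _); unfold_coords; lia.
Qed.

Lemma connected_to_corner n f : f \in T -> (absz (fw f - a%:Z) <= n)%N ->
  connected_in T f corner.
Proof.
elim: n f => [|n IH] f fT fw_n.
  apply: (bottom_strip_connected (n := absz (keyX f))) => //.
  by move: (fw_bounds f) fT; rewrite /T mem_Tpoly; lia.
have [fw_a|fw_a] := eqVneq (fw f) a%:Z.
  exact: (bottom_strip_connected (n := absz (keyX f))).
move: fT fw_n fw_a; face_cases f; rewrite {1}/T mem_Tpoly => fT fw_n fw_a;
  move: (fT); unfold_coords => fT'; have [A1 A2 A3 A4 A5] := adj_cases x y.
- have [x0|x0] := eqVneq x 0.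
    have g1 : Down x (y - 1) \in T by rewrite /T mem_Tpoly; unfold_coords; lia.
    have g2 : Up x (y - 1) \in T by rewrite /T mem_Tpoly; unfold_coords; lia.
    have [_ _ _ B _] := adj_cases x (y - 1).
    apply: connected_in_trans (connected_in_step A3 g1) _.
    apply: connected_in_trans (connected_in_step B g2) (IH _ g2 _); unfold_coords; lia.
  have g1 : Down (x - 1) y \in T by rewrite /T mem_Tpoly; unfold_coords; lia.
  have g2 : Up (x - 1) y \in T by rewrite /T mem_Tpoly; unfold_coords; lia.
  have [_ _ _ B _] := adj_cases (x - 1) y.
  apply: connected_in_trans (connected_in_step A2 g1) _.
  apply: connected_in_trans (connected_in_step B g2) (IH _ g2 _); unfold_coords; lia.
- have g : Up x y \in T by rewrite /T mem_Tpoly; unfold_coords; lia.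
  apply: connected_in_trans (connected_in_step A4 g) (IH _ g _); unfold_coords; lia.
Qed.

Lemma Tpoly_polyiamond : polyiamond T.
Proof.
split; first by apply/fset0Pn; exists corner; apply: corner_in.
move=> f g fT gT.
exact: connected_in_trans (connected_to_corner fT (leqnn _))
  (connected_in_sym gT (connected_to_corner gT (leqnn _))).
Qed.

End TpolyConnected.

Lemma bounding_hexagon (P : {fset face}) : polyiamond P ->
  exists (x0 y0 : int) (D A B C : nat),
  [/\ (A + B <= D)%N, (B + C <= D)%N, (C + A <= D)%N,
      (3 * D <= site_perimeter P + A + B + C)%N &
      transl (- x0) (- y0) @` P `<=` Tpoly D A B C].
Proof.
move=> Ppoly.
have [x0 [x1 [Px [hx0 hx0P hx0e] [hx1 hx1P hx1e] Px_range]]] := lipschitz_range Ppoly adj_fx.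
have [y0 [y1 [Py [hy0 hy0P hy0e] [hy1 hy1P hy1e] Py_range]]] := lipschitz_range Ppoly adj_fy.
have [w0 [w1 [Pw [hw0 hw0P hw0e] [hw1 hw1P hw1e] Pw_range]]] := lipschitz_range Ppoly adj_fw.
have sP := strip_site_perimeter_bound Px_range Py_range Pw_range.
have bnd h (hP : h \in P) := (Px h hP, Py h hP, Pw h hP, fw_bounds h).
move: (bnd _ hx0P) (bnd _ hx1P) (bnd _ hy0P) (bnd _ hy1P) (bnd _ hw0P) (bnd _ hw1P).
rewrite hx0e hx1e hy0e hy1e hw0e hw1e => [[[[? ?] ?] ?]] [[[? ?] ?] ?] [[[? ?] ?] ?]
  [[[? ?] ?] ?] [[[? ?] ?] ?] [[[? ?] ?] ?].
(* The triangle x >= x0, y >= y0, w <= w1, with its corners cut at w < w0,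
   x > x1 and y > y1. *)
pose D := w1 + 1 - x0 - y0; pose A := w0 - x0 - y0.
pose B := D - (x1 - x0 + 1); pose C := D - (y1 - y0 + 1).
exists x0, y0, (absz D), (absz A), (absz B), (absz C).
split; rewrite /D /A /B /C; try lia.
apply/fsubsetP => g /imfsetP[h hP ->].
by case: (bnd h hP) => [[[? ?] ?] ?]; rewrite mem_Tpoly fx_transl fy_transl fw_transl; lia.
Qed.

(* The defect of the side lengths (D; A, B, C): it vanishes exactly for the
   regular hexagons, and 6 |T^D_{A,B,C}| = p^2 - defect, p = 3D - A - B - C. *)
Definition defect (D A B C : int) : int :=
  3 * (D - A - B - C) ^+ 2 + 2 * ((A - B) ^+ 2 + (B - C) ^+ 2 + (C - A) ^+ 2).

(* The least defect compatible with a perimeter congruent to i modulo 6. *)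
Definition min_defect (i : nat) : int :=
  match i with 0 => 0 | 1 => 7 | 2 => 4 | 3 => 3 | 4 => 4 | _ => 7 end%N.

Lemma six_area_defect (D A B C : int) :
  6 * (D ^+ 2 - A ^+ 2 - B ^+ 2 - C ^+ 2) = (3 * D - A - B - C) ^+ 2 - defect D A B C.
Proof. rewrite /defect !expr2; lia. Qed.

Lemma sqr_ge0 (z : int) : 0 <= z ^+ 2. Proof. by rewrite expr2; nia. Qed.

Lemma sqr_ge1 (z : int) : z != 0 -> 1 <= z ^+ 2. Proof. by rewrite expr2 => z0; nia. Qed.

Lemma defect_ge0 D A B C : 0 <= defect D A B C.
Proof.
have := sqr_ge0 (D - A - B - C); have := sqr_ge0 (A - B); have := sqr_ge0 (B - C).
by have := sqr_ge0 (C - A); rewrite /defect; lia.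
Qed.

(* If A, B, C are not all equal, two of their three differences are nonzero. *)
Lemma sqr_diffs_ge2 (A B C : int) : ~ (A = B /\ B = C) ->
  2 <= (A - B) ^+ 2 + (B - C) ^+ 2 + (C - A) ^+ 2.
Proof.
move=> ABC; have s0 := sqr_ge0 (A - B); have s1 := sqr_ge0 (B - C); have s2 := sqr_ge0 (C - A).
have nz (z : int) : (z = 0 -> A = B /\ B = C) -> 1 <= z ^+ 2.
  by move=> zABC; apply: sqr_ge1; apply/eqP => /zABC.
have [AB|AB] := eqVneq A B.
  by have := nz (B - C) ltac:(lia); have := nz (C - A) ltac:(lia); lia.
have [BC|BC] := eqVneq B C.
  by have := nz (A - B) ltac:(lia); have := nz (C - A) ltac:(lia); lia.
by have := nz (A - B) ltac:(lia); have := nz (B - C) ltac:(lia); lia.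
Qed.

(* If p = 3D - A - B - C = 6r + j then the defect is at least m_j: for odd j
   the integer D - A - B - C is odd, and unless j is 0 or 3 the numbers
   A, B, C cannot all be equal (else 3 divides p). *)
Lemma defect_ge_min (r : int) (j : nat) (D A B C : int) : (j < 6)%N ->
  3 * D - A - B - C = 6 * r + j%:Z -> min_defect j <= defect D A B C.
Proof.
move=> j6 p_r.
have s0 := sqr_ge0 (D - A - B - C); have s1 := sqr_ge0 (A - B).
have s2 := sqr_ge0 (B - C); have s3 := sqr_ge0 (C - A).
have odd_j : odd j -> 1 <= (D - A - B - C) ^+ 2.
  move=> oj; apply: sqr_ge1; apply/eqP => e.
  by move: j6 oj p_r; case: j => [|[|[|[|[|[|]]]]]] //= _ _; lia.
have not_03 : (j != 0%N) && (j != 3%N) -> 2 <= (A - B) ^+ 2 + (B - C) ^+ 2 + (C - A) ^+ 2.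
  move=> j03; apply: sqr_diffs_ge2 => -[AB BC].
  by move: j6 j03 p_r; case: j {odd_j} => [|[|[|[|[|[|]]]]]] //= _ _; lia.
by rewrite /defect; move: j6 p_r odd_j not_03; case: j => [|[|[|[|[|[|]]]]]] //= _ _; lia.
Qed.

Lemma hexagon_area_bound (r : int) (i : nat) (D A B C : int) : 1 <= r -> (i < 6)%N ->
  0 <= A -> 0 <= B -> 0 <= C -> A + B <= D -> B + C <= D -> C + A <= D ->
  3 * D - A - B - C <= 6 * r + i%:Z ->
  [/\ 6 * (D ^+ 2 - A ^+ 2 - B ^+ 2 - C ^+ 2) <= (6 * r + i%:Z) ^+ 2 - min_defect i,
      3 * D - A - B - C < 6 * r + i%:Z ->
        6 * (D ^+ 2 - A ^+ 2 - B ^+ 2 - C ^+ 2) < (6 * r + i%:Z) ^+ 2 - min_defect i &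
      6 * (D ^+ 2 - A ^+ 2 - B ^+ 2 - C ^+ 2) = (6 * r + i%:Z) ^+ 2 - min_defect i ->
        3 * D - A - B - C = 6 * r + i%:Z /\ defect D A B C = min_defect i].
Proof.
move=> r1 i6 A0 B0 C0 AB BC CA p_le; rewrite six_area_defect.
have Q0 := defect_ge0 D A B C; set p := 3 * D - A - B - C in p_le *.
have p0 : 0 <= p by rewrite /p; lia.
(* A perimeter below 6r already loses: p^2 <= (6r - 1)^2 < (6r + i)^2 - m_i. *)
have [p_small|p_large] := ltrP p (6 * r).
  have p2 : p ^+ 2 <= (6 * r - 1) ^+ 2 by rewrite !expr2; nia.
  have : (6 * r - 1) ^+ 2 < (6 * r + i%:Z) ^+ 2 - min_defect i.
    by clear p_le; move: i6; rewrite !expr2; case: i => [|[|[|[|[|[|]]]]]] //= _; lia.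
  by split; lia.
pose j := absz (p - 6 * r)%R.
have p_j : p = 6 * r + j%:Z by rewrite /j; lia.
have j_i : (j <= i)%N by rewrite /j; lia.
have Qj := @defect_ge_min r j D A B C ltac:(lia) p_j.
clearbody p j; subst p; clear p_le p0 p_large; move: i6 j_i Qj; rewrite !expr2.
by case: i => [|[|[|[|[|[|]]]]]] //= _; case: j => [|[|[|[|[|[|]]]]]] //= _ Qj; split; lia.
Qed.

Lemma area_bound (r i : nat) (P : {fset face}) : (1 <= r)%N -> (i < 6)%N ->
  polyiamond P -> (site_perimeter P <= 6 * r + i)%N ->
  [/\ 6 * (area P)%:Z <= (6 * r%:Z + i%:Z) ^+ 2 - min_defect i,
      (site_perimeter P < 6 * r + i)%N ->
        6 * (area P)%:Z < (6 * r%:Z + i%:Z) ^+ 2 - min_defect i &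
      6 * (area P)%:Z = (6 * r%:Z + i%:Z) ^+ 2 - min_defect i ->
        exists (x0 y0 : int) (D A B C : nat),
        [/\ P = transl x0 y0 @` Tpoly D A B C,
            3 * D%:Z - A%:Z - B%:Z - C%:Z = 6 * r%:Z + i%:Z &
            defect D%:Z A%:Z B%:Z C%:Z = min_defect i]].
Proof.
move=> r1 i6 Ppoly sP.
have [x0 [y0 [D [A [B [C [AB BC CA p_sP P_sub]]]]]]] := bounding_hexagon Ppoly.
have cardT := card_Tpoly AB BC CA.
have cardP : (area P <= #|` Tpoly D A B C|)%N.
  by rewrite /area -(card_transl P (- x0) (- y0)); apply: fsubset_leq_card.
have [le lt eq] := @hexagon_area_bound r%:Z i D%:Z A%:Z B%:Z C%:Z
  ltac:(lia) i6 ltac:(lia) ltac:(lia) ltac:(lia) ltac:(lia) ltac:(lia) ltac:(lia) ltac:(lia).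
move: le lt eq; rewrite !expr2 => le lt eq; split; [lia|lia|move=> opt].
have [p_r Q_m] : 3 * D%:Z - A%:Z - B%:Z - C%:Z = 6 * r%:Z + i%:Z /\
    defect D%:Z A%:Z B%:Z C%:Z = min_defect i by apply: eq; lia.
exists x0, y0, D, A, B, C; split => //.
have /fsubset_cardP/(_ P_sub) P_T : #|` transl (- x0) (- y0) @` P| = #|` Tpoly D A B C|.
  by rewrite card_transl; move: cardP opt; rewrite /area; lia.
by apply/fsetP => f; rewrite mem_transl -P_T mem_transl !opprK transl_K'.
Qed.

(* A hexagonal region is cut out by bounds (x0, x1, y0, y1, w0, w1) on the
   three strip indices; every T^d_{a,b,c} is one, and the symmetries of T^2
   map hexagonal regions to hexagonal regions by acting on the bounds. *)
Definition bounds : Type := (int * int * int * int * int * int)%type.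

Definition in_region (b : bounds) (f : face) : bool :=
  let: (x0, x1, y0, y1, w0, w1) := b in
  [&& x0 <= fx f, fx f <= x1, y0 <= fy f, fy f <= y1, w0 <= fw f & fw f <= w1].

Definition Tbounds (d a b c : nat) : bounds :=
  (0, (d - b)%N%:Z - 1, 0, (d - c)%N%:Z - 1, a%:Z, d%:Z - 1).

Lemma mem_Tpoly_region d a b c f : (f \in Tpoly d a b c) = in_region (Tbounds d a b c) f.
Proof. by rewrite mem_Tpoly /Tbounds /=; lia. Qed.

Definition transl_bounds (u v : int) (b : bounds) : bounds :=
  let: (x0, x1, y0, y1, w0, w1) := b in
  (x0 + u, x1 + u, y0 + v, y1 + v, w0 + u + v, w1 + u + v).
Definition rot_bounds (b : bounds) : bounds :=
  let: (x0, x1, y0, y1, w0, w1) := b in (-1 - y1, -1 - y0, w0, w1, x0, x1).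
Definition refl_bounds (b : bounds) : bounds :=
  let: (x0, x1, y0, y1, w0, w1) := b in (y0, y1, x0, x1, w0, w1).

Definition lsym (u v : int) (k : nat) (e : bool) (f : face) : face :=
  transl u v (iter k rot60 (if e then refl f else f)).
Definition linear_bounds (k : nat) (e : bool) (b : bounds) : bounds :=
  iter k rot_bounds (if e then refl_bounds b else b).

Lemma in_region_lsym u v k e b f :
  in_region (transl_bounds u v (linear_bounds k e b)) (lsym u v k e f) = in_region b f.
Proof.
have Etr b' f' : in_region (transl_bounds u v b') (transl u v f') = in_region b' f'.
  by case: b' => [[[[[x0 x1] y0] y1] w0] w1]; face_cases f'; rewrite /=; unfold_coords; lia.
have Erot b' f' : in_region (rot_bounds b') (rot60 f') = in_region b' f'.
  by case: b' => [[[[[x0 x1] y0] y1] w0] w1]; face_cases f'; rewrite /=; unfold_coords; lia.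
have Erefl b' f' : in_region (refl_bounds b') (refl f') = in_region b' f'.
  by case: b' => [[[[[x0 x1] y0] y1] w0] w1]; face_cases f'; rewrite /=; unfold_coords; lia.
rewrite /linear_bounds /lsym Etr; elim: k => [|k IH] /=; last by rewrite Erot.
by case: e; rewrite ?Erefl.
Qed.

Lemma lsym_surjective u v k e f' : exists f, lsym u v k e f = f'.
Proof.
pose rot_inv (f : face) : face :=
  let: (x, y, o) := f in (x + y + (if o then 0 else 1), -1 - x, ~~ o).
have rotK f : rot60 (rot_inv f) = f.
  by face_cases f; rewrite /= /Up /Down; apply/eqP; rewrite face_eq; lia.
have [f2 f2E] : exists f2, iter k rot60 f2 = transl (- u) (- v) f'.
  elim: k (transl (- u) (- v) f') => [|k IH] f1; first by exists f1.
  by have [f3 f3E] := IH (rot_inv f1); exists f3; rewrite iterS f3E rotK.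
exists (if e then refl f2 else f2).
have reflK f : refl (refl f) = f by face_cases f.
by rewrite /lsym; case: e; rewrite ?reflK f2E transl_K'.
Qed.

Lemma image_region (S : {fset face}) b u v k e :
  (forall f, (f \in S) = in_region b f) ->
  forall f, (f \in lsym u v k e @` S) = in_region (transl_bounds u v (linear_bounds k e b)) f.
Proof.
move=> Sb f; apply/imfsetP/idP => [[g gS ->]|fb]; first by rewrite in_region_lsym -Sb.
have [g gf] := lsym_surjective u v k e f; rewrite -gf in fb *.
by exists g => //; rewrite Sb -(in_region_lsym u v k e).
Qed.

(* The shape of a region: its bounds up to translation. *)
Definition region_shape (b : bounds) : int * int * int * int :=
  let: (x0, x1, y0, y1, w0, w1) := b in (x1 - x0, y1 - y0, w0 - x0 - y0, w1 - x0 - y0).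

Lemma region_shape_transl u v b : region_shape (transl_bounds u v b) = region_shape b.
Proof. by case: b => [[[[[x0 x1] y0] y1] w0] w1] /=; congr (_, _, _, _); lia. Qed.

Lemma region_shape_eq (b1 b2 : bounds) :
  region_shape b1 = region_shape b2 -> exists u v, transl_bounds u v b1 = b2.
Proof.
case: b1 => [[[[[x0 x1] y0] y1] w0] w1]; case: b2 => [[[[[x0' x1'] y0'] y1'] w0'] w1'].
move=> /= [] s1 s2 s3 s4.
by exists (x0' - x0), (y0' - y0); congr (_, _, _, _, _, _); lia.
Qed.

Lemma Tpoly_congruent (x0 y0 : int) (d a b c D A B C : nat) :
  (exists k e, region_shape (linear_bounds k e (Tbounds d a b c)) =
               region_shape (Tbounds D A B C)) ->
  exists g, lattice_sym g /\ transl x0 y0 @` Tpoly D A B C = g @` Tpoly d a b c.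
Proof.
case=> k [e]; rewrite -(region_shape_transl x0 y0 (Tbounds D A B C)).
move=> /region_shape_eq[u [v uv]].
exists (lsym u v k e); split; first by exists u, v, k, e.
apply/fsetP => f; rewrite (image_region _ _ _ _ (mem_Tpoly_region d a b c)) uv.
by rewrite (image_region x0 y0 0 false (mem_Tpoly_region D A B C)).
Qed.

Lemma small_defect (D A B C : int) : defect D A B C <= 7 ->
  exists e1 e2 e3 : int, [/\ D - A - B - C = e1, A - B = e2 & B - C = e3] /\
    [/\ e1 \in [:: -1; 0; 1], e2 \in [:: -1; 0; 1] & e3 \in [:: -1; 0; 1]].
Proof.
have sqr_le3 (z : int) : z ^+ 2 <= 3 -> -1 <= z <= 1 by rewrite expr2 => z3; nia.
move=> Q7; exists (D - A - B - C), (A - B), (B - C); split => //.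
have := sqr_ge0 (D - A - B - C); have := sqr_ge0 (A - B).
have := sqr_ge0 (B - C); have := sqr_ge0 (C - A); move: Q7; rewrite /defect => Q7 s1 s2 s3 s4.
by rewrite !inE; split; [have := sqr_le3 (D - A - B - C) | have := sqr_le3 (A - B)
  | have := sqr_le3 (B - C)]; lia.
Qed.

Ltac shape_match := rewrite /linear_bounds /Tbounds /=; congr (_, _, _, _); lia.
Ltac find_symmetry :=
  first [ exists 0%N, false; shape_match | exists 1%N, false; shape_match
        | exists 2%N, false; shape_match | exists 3%N, false; shape_match
        | exists 4%N, false; shape_match | exists 5%N, false; shape_match
        | exists 0%N, true; shape_match | exists 1%N, true; shape_match
        | exists 2%N, true; shape_match | exists 3%N, true; shape_match
        | exists 4%N, true; shape_match | exists 5%N, true; shape_match ].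

(* Step 4: the truncated triangles of perimeter 6r + i and least defect m_i
   are, up to translation, the images of E_{B_i}(r) under symmetries of T^2.
   The side-length differences are in {-1, 0, 1}; each of the 27 patterns
   either has the wrong defect or perimeter, or is a rotation/reflection of
   the side lengths of E_{B_i}(r). *)
Lemma optimal_hexagon_congruent (r i D A B C : nat) (x0 y0 : int) :
  (1 <= r)%N -> (i < 6)%N ->
  3 * D%:Z - A%:Z - B%:Z - C%:Z = 6 * r%:Z + i%:Z -> defect D A B C = min_defect i ->
  exists g, lattice_sym g /\ transl x0 y0 @` Tpoly D A B C = g @` EB i r.
Proof.
move=> r1 i6 p_r Q_m.
have Q7 : defect D A B C <= 7 by rewrite Q_m; case: (i) i6 => [|[|[|[|[|[|]]]]]] // _; lia.
have [e1 [e2 [e3 [[E1 E2 E3] [h1 h2 h3]]]]] := small_defect Q7.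
have E4 : C%:Z - A%:Z = - (e2 + e3) by lia.
move: h1 h2 h3; rewrite !inE => /or3P[] /eqP e1E /or3P[] /eqP e2E /or3P[] /eqP e3E.
all: move: Q_m; rewrite /defect E1 E2 E3 E4 e1E e2E e3E.
all: case: i i6 p_r => [|[|[|[|[|[|//]]]]]] _ p_r /= Q_m; try lia.
all: apply: Tpoly_congruent; find_symmetry.
Qed.

Lemma EB_is_Tpoly (r i : nat) : (1 <= r)%N -> (i < 6)%N -> exists d a b c : nat,
  [/\ EB i r = Tpoly d a b c, (a + c < d)%N /\ (b < d)%N,
      [/\ a + b <= d, b + c <= d & c + a <= d]%N,
      (3 * d = 6 * r + i + a + b + c)%N &
      6 * (d%:Z ^+ 2 - a%:Z ^+ 2 - b%:Z ^+ 2 - c%:Z ^+ 2) = (6 * r%:Z + i%:Z) ^+ 2 - min_defect i].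
Proof.
case: r => // r _; case: i => [|[|[|[|[|[|//]]]]]] _ /=; rewrite !expr2.
- by exists (3 * r.+1)%N, r.+1, r.+1, r.+1; split => //; try split; lia.
- by exists (3 * r.+1)%N, r, r.+1, r.+1; split => //; try split; lia.
- by exists (3 * r.+1).+1, r.+1, r.+1, r.+2; split => //; try split; lia.
- by exists (3 * r.+1).+1, r.+1, r.+1, r.+1; split => //; try split; lia.
- by exists (3 * r.+1).+2, r.+1, r.+2, r.+2; split => //; try split; lia.
- by exists (3 * r.+1).+2, r.+1, r.+1, r.+2; split => //; try split; lia.
Qed.

Local Close Scope ring_scope.

Theorem proposition7p2 (r i : nat) (hr : (1 <= r)%N) (hi : (i < 6)%N) :
  [/\ polyiamond (EB i r),
      site_perimeter (EB i r) = (6 * r + i)%N,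
      (forall P : {fset face}, polyiamond P -> site_perimeter P = (6 * r + i)%N ->
         (area P <= area (EB i r))%N) &
      (forall P : {fset face}, polyiamond P -> site_perimeter P = (6 * r + i)%N ->
         area P = area (EB i r) ->
         exists g : face -> face, lattice_sym g /\ P = g @` EB i r)].
Proof.
have [d [a [b [c [EB_T [ac_d b_d] [ab bc ca] p_EB area_EB]]]]] := EB_is_Tpoly hr hi.
have six_area : (6 * (area (EB i r))%:Z = (6 * r%:Z + i%:Z) ^+ 2 - min_defect i)%R.
  by move: (card_Tpoly ab bc ca) area_EB; rewrite EB_T /area !expr2; lia.
have EB_poly : polyiamond (EB i r) by rewrite EB_T; apply: Tpoly_polyiamond.
(* s(E) <= 3d - a - b - c, and a smaller site-perimeter would force a
   smaller area. *)
have sEB : site_perimeter (EB i r) = (6 * r + i)%N.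
  apply/eqP; rewrite eqn_leq; apply/andP; split.
    by rewrite EB_T; apply: leq_trans (site_perimeter_Tpoly ab bc ca) _; lia.
  rewrite leqNgt; apply/negP => lt.
  by have [_ /(_ lt)] := area_bound hr hi EB_poly (ltnW lt); lia.
split => // P Ppoly sP; have [le _ opt] := area_bound hr hi Ppoly (eq_leq sP).
  by move: le; lia.
move=> areaP; have [x0 [y0 [D [A [B [C [-> p_r Q_m]]]]]]] := opt ltac:(lia).
exact: optimal_hexagon_congruent.
Qed.
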